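(* Let $F$ be the CDF of a probability measure on $\mathbb{R}$, and for $z\ge0$ define $G_z(x)=\max\{0,F(x)-z\}$ for $x<0$ and $G_z(x)=\min\{1,F(x)+z\}$ for $x\ge0$. Then there exists $z\ge0$ such that $G_z$ is the CDF of a measure in $\mathcal{L}$ that minimizes $\sup_{x\in\mathbb{R}}|F(x)-G(x)|$ over all CDFs $G$ of measures in $\mathcal{L}$.
   Context: $\epsilon>0$, $B>0$. $\mathcal{L}=\{\eta\in\mathcal{P}(\mathbb{R}):\mathbb{E}_\eta|X|^{1+\epsilon}\le B\}$, where $\mathcal{P}(\mathbb{R})$ is the set of Borel probability measures on $\mathbb{R}$. *)

From HB Require Import structures.
From mathcomp Require Import all_boot all_order all_algebra.
From mathcomp Require Import all_classical all_reals all_analysis.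
Set Implicit Arguments. Unset Strict Implicit. Unset Printing Implicit Defensive.
Import Order.TTheory GRing.Theory Num.Theory.
Local Open Scope classical_set_scope.
Local Open Scope ring_scope.

Definition cdfP (R : realType) (mu : probability R R) (x : R) : R :=
  fine (mu `]-oo, x]%classic).

Definition inL (R : realType) (eps B : R) (eta : probability R R) : Prop :=
  (\int[eta]_x ((`|x| `^ (1 + eps))%:E) <= B%:E)%E.

Definition Gz (R : realType) (F : R -> R) (z : R) (x : R) : R :=
  if x < 0 then Num.max 0 (F x - z) else Num.min 1 (F x + z).

Definition kdist (R : realType) (F G : R -> R) : \bar R :=
  ereal_sup [set (`|F x - G x|)%:E | x in [set: R]].

From HB Require Import structures.
From mathcomp Require Import all_boot all_order all_algebra.
From mathcomp Require Import all_classical all_reals all_analysis.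
From mathcomp Require Import measurable_realfun lra.
Import Order.TTheory GRing.Theory Num.Theory numFieldNormedType.Exports.
Local Open Scope classical_set_scope.
Local Open Scope ring_scope.
Set Implicit Arguments. Unset Strict Implicit. Unset Printing Implicit Defensive.

(* By the layer-cake formula, E|X|^p is the integral over r >= 0 of
   P(X > r^(1/p)) plus the integral over r < 0 of P(X <= -(-r)^(1/p)); hence the
   moment can only decrease when the CDF is raised on [0, +oo) and lowered on
   (-oo, 0).  Among all CDFs within Kolmogorov distance z of F, G_z is the one
   pushed furthest in this way, so an eta in L at distance d from F makes G_d
   belong to L.  The moment of G_z is nonincreasing in z, vanishes for z = 1
   (G_1 is the CDF of the Dirac mass at 0) and, by monotone convergence in the
   two tail integrals, is right-continuous in z.  The admissible levels thus
   form a closed half-line [z0, +oo), and G_z0 is the optimal CDF. *)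

Section cdfP_properties.
Context {R : realType} (eta : probability R R).

Let idR : R -> R := idfun.
HB.instance Definition _ := isMeasurableFun.Build _ _ R R idR (@measurable_id _ _ setT).

Lemma measure_itvNyc a : eta `]-oo, a]%classic = (cdfP eta a)%:E.
Proof. by rewrite /cdfP fineK // fin_num_measure. Qed.

Lemma measure_itvoy a : eta `]a, +oo[%classic = (1 - cdfP eta a)%:E.
Proof.
have : (eta `]-oo, a]%classic + eta `]a, +oo[%classic = 1)%E.
  rewrite -measureU //= ?itv_setU_setT ?probability_setT //.
  by rewrite -eq_opE; exact: disjoint_rays.
rewrite measure_itvNyc -[eta `]a, +oo[%classic]fineK ?fin_num_measure // -EFinD.
by move=> [<-]; rewrite addrC addKr.
Qed.

Lemma cdfP_ge0 a : 0 <= cdfP eta a.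
Proof. by rewrite -lee_fin -measure_itvNyc. Qed.

Lemma cdfP_le1 a : cdfP eta a <= 1.
Proof. by rewrite -lee_fin -measure_itvNyc probability_le1. Qed.

Lemma cdfP_nondecreasing : nondecreasing (cdfP eta).
Proof.
move=> a b ab; rewrite -lee_fin -!measure_itvNyc le_measure ?inE //.
by apply: subitvPr; rewrite bnd_simp.
Qed.

Lemma measurable_cdfP : measurable_fun setT (cdfP eta).
Proof. exact: nondecreasing_measurable cdfP_nondecreasing. Qed.

Lemma cdfP_right_continuous : right_continuous (cdfP eta).
Proof.
move=> a; rewrite /cdfP; apply: fine_cvg; rewrite fineK ?fin_num_measure //.
exact: (@cdf_right_continuous _ _ _ eta (idR : {RV eta >-> R}) a).
Qed.

Lemma cvg_cdfPNy0 : cdfP eta x @[x --> -oo] --> (0 : R).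
Proof. exact/fine_cvg/(cvg_cdfNy0 (idR : {RV eta >-> R})). Qed.

Lemma cvg_cdfPy1 : cdfP eta x @[x --> +oo] --> (1 : R).
Proof. exact/fine_cvg/(cvg_cdfy1 (idR : {RV eta >-> R})). Qed.

End cdfP_properties.

Section kdist_properties.
Context {R : realType}.

Lemma kdist_ub (F G : R -> R) x : ((`|F x - G x|)%:E <= kdist F G)%E.
Proof. by apply: ereal_sup_ubound; exists x. Qed.

Lemma kdist_le (F G : R -> R) (d : R) :
  (forall x, `|F x - G x| <= d) -> (kdist F G <= d%:E)%E.
Proof. by move=> FGd; apply: ge_ereal_sup => _ [x _ <-]; rewrite lee_fin. Qed.

Lemma kdist_cdfP_fin (mu eta : probability R R) :
  kdist (cdfP mu) (cdfP eta) \is a fin_num.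
Proof.
rewrite ge0_fin_numE; last exact: le_trans (kdist_ub _ _ 0).
apply: le_lt_trans (ltry 1); apply: kdist_le => x.
move: (cdfP_ge0 mu x) (cdfP_le1 mu x) (cdfP_ge0 eta x) (cdfP_le1 eta x) => *.
by rewrite ler_norml; apply/andP; split; lra.
Qed.

End kdist_properties.

Section moment_tails.
Context {R : realType} (p : R).
Hypothesis p_gt0 : 0 < p.

Definition moment (eta : probability R R) : \bar R :=
  (\int[eta]_x (`|x| `^ p)%:E)%E.

(* For r >= 0, [upper_tail eta r] = P(X_+^p > r); for r < 0,
   [lower_tail eta r] = P(-X_-^p <= r), X being distributed as eta. *)
Definition upper_tail (eta : probability R R) (r : R) : R :=
  1 - cdfP eta (r `^ p^-1).

Definition lower_tail (eta : probability R R) (r : R) : R :=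
  cdfP eta (- (- r) `^ p^-1).

Let pos_pow (x : R) : R := Num.max x 0 `^ p.
Let neg_pow (x : R) : R := - Num.max (- x) 0 `^ p.

Let measurable_pos_pow : measurable_fun setT pos_pow.
Proof.
apply: (measurableT_comp (measurable_powR p)).
exact: measurable_maxr.
Qed.

Let measurable_neg_pow : measurable_fun setT neg_pow.
Proof.
apply: measurableT_comp => //.
apply: (measurableT_comp (measurable_powR p)).
exact: measurable_maxr.
Qed.

HB.instance Definition _ := isMeasurableFun.Build _ _ R R pos_pow measurable_pos_pow.
HB.instance Definition _ := isMeasurableFun.Build _ _ R R neg_pow measurable_neg_pow.

Let pos_pow_ge0 x : 0 <= pos_pow x. Proof. exact: powR_ge0. Qed.
Let neg_pow_le0 x : neg_pow x <= 0. Proof. by rewrite oppr_le0 powR_ge0. Qed.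

Let normr_powR_split x : `|x| `^ p = pos_pow x - neg_pow x.
Proof.
rewrite /pos_pow /neg_pow opprK.
have [x0|x0] := leP 0 x.
  by rewrite (max_idPr _) ?oppr_le0 // powR0 ?gt_eqF // addr0 ger0_norm.
by rewrite (max_idPl _) ?oppr_ge0 ?ltW // powR0 ?gt_eqF // add0r ltr0_norm.
Qed.

Let powR_mono : {in Num.nneg &, {mono (@powR R) ^~ p : x y / x <= y}}.
Proof. exact/le_mono_in/gt0_ltr_powR. Qed.

Let powRVK r : 0 <= r -> (r `^ p^-1) `^ p = r.
Proof. by move=> r0; rewrite -powRrM mulVf ?gt_eqF // powRr1. Qed.

Let pos_pow_gt r x : 0 <= r -> (r < pos_pow x) = (r `^ p^-1 < x).
Proof.
move=> r0; rewrite /pos_pow -{1}(powRVK r0).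
rewrite (leW_mono_in powR_mono) ?nnegrE ?powR_ge0 ?le_max ?lexx ?orbT //.
by rewrite lt_max (ltNge _ 0) powR_ge0 orbF.
Qed.

Let neg_pow_le r x : r < 0 -> (neg_pow x <= r) = (x <= - (- r) `^ p^-1).
Proof.
move=> r0; have r0' : 0 <= - r by rewrite oppr_ge0 ltW.
have t0 : 0 < (- r) `^ p^-1 by apply: powR_gt0; rewrite oppr_gt0.
rewrite /neg_pow lerNl -{1}(powRVK r0').
rewrite powR_mono ?nnegrE ?powR_ge0 ?le_max ?lexx ?orbT //.
by rewrite (leNgt _ 0) t0 orbF lerNr.
Qed.

Let ccdf_pos_pow (eta : probability R R) r : 0 <= r ->
  ccdf (pos_pow : {RV eta >-> R}) r = (upper_tail eta r)%:E.
Proof.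
move=> r0; rewrite -measure_itvoy; congr (eta _).
by apply/seteqP; split => x /=; rewrite !in_itv /= !andbT pos_pow_gt.
Qed.

Let cdf_neg_pow (eta : probability R R) r : r < 0 ->
  cdf (neg_pow : {RV eta >-> R}) r = (lower_tail eta r)%:E.
Proof.
move=> r0; rewrite -measure_itvNyc; congr (eta _).
by apply/seteqP; split => x /=; rewrite !in_itv /= neg_pow_le.
Qed.

Lemma moment_tails (eta : probability R R) : moment eta =
  (\int[lebesgue_measure]_(r in `[0%R, +oo[) (upper_tail eta r)%:E +
   \int[lebesgue_measure]_(r in `]-oo, 0%R[) (lower_tail eta r)%:E)%E.
Proof.
transitivity (\int[eta]_x ((pos_pow x)%:E + (- neg_pow x)%:E))%E.
  by apply: eq_integral => x _; rewrite normr_powR_split.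
rewrite ge0_integralD //; last 4 first.
- by move=> x _; rewrite lee_fin.
- exact/measurable_EFinP.
- by move=> x _; rewrite lee_fin oppr_ge0.
- exact/measurable_EFinP/measurableT_comp.
congr (_ + _)%E.
  rewrite -expectation_def ge0_expectation_ccdf //.
  by apply: eq_integral => r; rewrite inE /= in_itv /= andbT => /ccdf_pos_pow.
rewrite -[LHS]oppeK -integral_ge0N; last by move=> x _; rewrite lee_fin oppr_ge0.
rewrite (eq_integral (fun x => (neg_pow x)%:E)); last first.
  by move=> x _; rewrite -EFinN opprK.
rewrite -expectation_def le0_expectation_cdf // oppeK.
by apply: eq_integral => r; rewrite inE /= in_itv /= => /cdf_neg_pow.
Qed.

Lemma upper_tail_ge0 eta r : 0 <= upper_tail eta r.
Proof. by rewrite subr_ge0 cdfP_le1. Qed.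

Lemma lower_tail_ge0 eta r : 0 <= lower_tail eta r.
Proof. exact: cdfP_ge0. Qed.

Lemma measurable_upper_tail eta D : measurable_fun D (upper_tail eta).
Proof.
apply: measurable_funTS; apply: measurable_funB => //.
exact: measurableT_comp (measurable_cdfP eta) (measurable_powR _).
Qed.

Lemma measurable_lower_tail eta D : measurable_fun D (lower_tail eta).
Proof.
apply: measurable_funTS; apply: measurableT_comp (measurable_cdfP eta) _.
apply: measurableT_comp => //.
exact: measurableT_comp (measurable_powR _) _.
Qed.

Lemma le_moment (eta eta' : probability R R) :
  (forall s, 0 <= s -> cdfP eta' s <= cdfP eta s) ->
  (forall s, s < 0 -> cdfP eta s <= cdfP eta' s) ->
  (moment eta <= moment eta')%E.
Proof.
move=> le_pos le_neg; rewrite !moment_tails.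
apply: leeD; apply: ge0_le_integral => //;
  try by [move=> r _; rewrite lee_fin ?upper_tail_ge0 ?lower_tail_ge0
         | apply/measurable_EFinP; exact: measurable_upper_tail
         | apply/measurable_EFinP; exact: measurable_lower_tail].
  move=> r; rewrite /= in_itv /= andbT => r0.
  by rewrite lee_fin lerD2l lerN2 le_pos // powR_ge0.
move=> r; rewrite /= in_itv /= => r0.
by rewrite lee_fin le_neg // oppr_lt0 powR_gt0 // oppr_gt0.
Qed.

End moment_tails.

Section integral_max0_subr.
Context d (T : measurableType d) (R : realType) (m : {measure set T -> \bar R}).

Let continuous_max0_subl (a : R) : continuous (fun v : R => Num.max 0 (a - v)).
Proof.
move=> v; apply: (@continuous_max R R (cst 0) (fun v => a - v) v).
  exact: cst_continuous.
apply: (@continuousB R R^o R (cst a) id v) => //.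
exact: cst_continuous.
Qed.

Lemma cvg_integral_max0_subr (D : set T) (c : T -> R) (z_ : R^nat) (z : R) :
  measurable D -> measurable_fun D c ->
  nonincreasing_seq z_ -> z_ n @[n --> \oo] --> z ->
  (\int[m]_(x in D) (Num.max 0 (c x - z_ n))%:E @[n --> \oo] -->
   \int[m]_(x in D) (Num.max 0 (c x - z))%:E)%E.
Proof.
move=> mD mc z_ni z_cvg.
rewrite (eq_integral (fun x => limn (fun n => (Num.max 0 (c x - z_ n))%:E)))%E.
  apply: cvg_monotone_convergence => //.
  - move=> n; apply/measurable_EFinP; apply: measurable_maxr => //.
    exact: measurable_funB.
  - by move=> n x _; rewrite lee_fin le_max lexx.
  - move=> x _ k n kn.
    by rewrite lee_fin ge_max le_max lexx /= le_max lerD2l lerN2 z_ni ?orbT.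
move=> x _; apply/esym/cvg_lim => //; apply: cvg_EFin; first exact: nearW.
exact: (continuous_cvg _ (@continuous_max0_subl (c x) z) z_cvg).
Qed.

End integral_max0_subr.

Section Gz_cumulative.
Context {R : realType} (F : R -> R) (z : R).

Lemma Gz_lt0 x : x < 0 -> Gz F z x = Num.max 0 (F x - z).
Proof. by move=> x0; rewrite /Gz x0. Qed.

Lemma Gz_ge0 x : 0 <= x -> Gz F z x = Num.min 1 (F x + z).
Proof. by rewrite /Gz leNgt => /negbTE ->. Qed.

Lemma dist_Gz_le x : 0 <= z -> 0 <= F x <= 1 -> `|F x - Gz F z x| <= z.
Proof.
move=> z0 /andP[F0 F1]; rewrite /Gz ler_norml.
case: ifP => _.
  by have [h|h] := leP 0 (F x - z); apply/andP; split; lra.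
by have [h|h] := leP 1 (F x + z); apply/andP; split; lra.
Qed.

Let continuous_max0_subr : continuous (fun v : R => Num.max 0 (v - z)).
Proof.
move=> v; apply: (@continuous_max R R (cst 0) (fun v => v - z) v).
  exact: cst_continuous.
by apply: continuousB => //; exact: cst_continuous.
Qed.

Let continuous_min1_addr : continuous (fun v : R => Num.min 1 (v + z)).
Proof.
move=> v; apply: (@continuous_min R R (cst 1) (fun v => v + z) v).
  exact: cst_continuous.
by apply: continuousD => //; exact: cst_continuous.
Qed.

Lemma Gz_nondecreasing : 0 <= z -> (forall x, 0 <= F x <= 1) ->
  nondecreasing F -> nondecreasing (Gz F z).
Proof.
move=> z0 F01 F_nd x y xy; have Fxy := F_nd _ _ xy.
have /andP[Fx0 Fx1] := F01 x; have /andP[Fy0 Fy1] := F01 y.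
have [y0|y0] := ltP y 0.
  by rewrite !Gz_lt0 ?(le_lt_trans xy) // ge_max !le_max lexx /= lerD2r Fxy orbT.
rewrite [Gz F z y]Gz_ge0 //; have [x0|x0] := ltP x 0.
  by rewrite Gz_lt0 // ge_max !le_min ler01 /=; apply/and3P; split; lra.
by rewrite Gz_ge0 // le_min !ge_min lexx /= lerD2r Fxy orbT.
Qed.

Lemma Gz_right_continuous : right_continuous F -> right_continuous (Gz F z).
Proof.
move=> F_rc a; have [a0|a0] := ltP a 0.
  rewrite Gz_lt0 //; apply: cvg_trans; last first.
    exact: (continuous_cvg _ (@continuous_max0_subr (F a)) (F_rc a)).
  by apply: near_eq_cvg; near=> x; rewrite /= Gz_lt0.
rewrite Gz_ge0 //; apply: cvg_trans; last first.
  exact: (continuous_cvg _ (@continuous_min1_addr (F a)) (F_rc a)).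
by apply: near_eq_cvg; near=> x; rewrite /= Gz_ge0 // (le_trans a0) // ltW //.
Unshelve. all: by end_near. Qed.

Lemma cvg_GzNy0 : 0 <= z ->
  F x @[x --> -oo] --> (0 : R) -> Gz F z x @[x --> -oo] --> (0 : R).
Proof.
move=> z0 F_Ny0; have -> : 0 = Num.max 0 (0 - z) :> R.
  by rewrite sub0r; apply/esym/max_idPl; rewrite oppr_le0.
apply: cvg_trans (continuous_cvg _ (@continuous_max0_subr 0) F_Ny0).
by apply: near_eq_cvg; near=> x; rewrite /= Gz_lt0.
Unshelve. all: by end_near. Qed.

Lemma cvg_Gzy1 : 0 <= z ->
  F x @[x --> +oo] --> (1 : R) -> Gz F z x @[x --> +oo] --> (1 : R).
Proof.
move=> z0 F_y1; have -> : 1 = Num.min 1 (1 + z) :> R.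
  by apply/esym/min_idPl; rewrite lerDl.
apply: cvg_trans (continuous_cvg _ (@continuous_min1_addr 1) F_y1).
by apply: near_eq_cvg; near=> x; rewrite /= Gz_ge0 // ltW.
Unshelve. all: by end_near. Qed.

End Gz_cumulative.

Section Gz_probability.
Context {R : realType} (mu : probability R R) (z : {nonneg R}).

Let cdfP_mu01 x : 0 <= cdfP mu x <= 1.
Proof. by rewrite cdfP_ge0 cdfP_le1. Qed.

HB.instance Definition _ := isCumulative.Build R _ R (Gz (cdfP mu) z%:num)
  (Gz_nondecreasing (ge0 z) cdfP_mu01 (cdfP_nondecreasing mu))
  (Gz_right_continuous (@cdfP_right_continuous _ mu)).
HB.instance Definition _ := isCumulativeBounded.Build R 0 1 (Gz (cdfP mu) z%:num)
  (cvg_GzNy0 (ge0 z) (cvg_cdfPNy0 mu)) (cvg_Gzy1 (ge0 z) (cvg_cdfPy1 mu)).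

(* [lebesgue_stieltjes_measure] lives on [measurableTypeR R]; its probability
   structure is transported to [R] itself. *)
Let lsG := lebesgue_stieltjes_measure (Gz (cdfP mu) z%:num).

Definition Gz_prob : set R -> \bar R := lsG.

HB.instance Definition _ := isMeasure.Build _ R R Gz_prob
  (measure0 lsG) (measure_ge0 lsG) (@measure_semi_sigma_additive _ _ _ lsG).
HB.instance Definition _ :=
  Measure_isProbability.Build _ R R Gz_prob (probability_setT lsG).

Lemma cdfP_Gz_prob x : cdfP Gz_prob x = Gz (cdfP mu) z%:num x.
Proof.
have := cdf_lebesgue_stieltjes_id (Gz (cdfP mu) z%:num) x.
by rewrite /cdf /distribution /pushforward /cdfP => ->.
Qed.

Lemma kdist_Gz_prob_le : (kdist (cdfP mu) (cdfP Gz_prob) <= z%:num%:E)%E.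
Proof.
apply: kdist_le => x; rewrite cdfP_Gz_prob.
by apply: dist_Gz_le; rewrite ?cdfP_mu01.
Qed.

End Gz_probability.

Section Gz_moment.
Context {R : realType} (p : R) (mu : probability R R).
Hypothesis p_gt0 : 0 < p.

Lemma moment_Gz_prob (z : {nonneg R}) : moment p (Gz_prob mu z) =
  (\int[lebesgue_measure]_(r in `[0%R, +oo[)
      (Num.max 0 (upper_tail p mu r - z%:num))%:E +
   \int[lebesgue_measure]_(r in `]-oo, 0%R[)
      (Num.max 0 (lower_tail p mu r - z%:num))%:E)%E.
Proof.
rewrite moment_tails //; congr (_ + _)%E.
all: apply: eq_integral => r; rewrite inE /= in_itv /=.
  rewrite andbT => r0; rewrite /upper_tail cdfP_Gz_prob Gz_ge0 ?powR_ge0 //.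
  congr (_%:E).
  have [h|h] := leP 1 (cdfP mu (r `^ p^-1) + z%:num);
    have [h'|h'] := leP 0 (1 - cdfP mu (r `^ p^-1) - z%:num); lra.
move=> r0; rewrite /lower_tail cdfP_Gz_prob Gz_lt0 //.
by rewrite oppr_lt0 powR_gt0 // oppr_gt0.
Qed.

Lemma moment_Gz_prob_le (eta : probability R R) (d : {nonneg R}) :
  (forall x, `|cdfP mu x - cdfP eta x| <= d%:num) ->
  (moment p (Gz_prob mu d) <= moment p eta)%E.
Proof.
move=> close; apply: le_moment => // s s0; rewrite cdfP_Gz_prob.
  rewrite Gz_ge0 // le_min cdfP_le1 /=.
  by move: (close s); rewrite ler_norml => /andP[? ?]; lra.
rewrite Gz_lt0 // ge_max cdfP_ge0 /=.
by move: (close s); rewrite ler_norml => /andP[? ?]; lra.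
Qed.

Lemma moment_Gz_prob_nonincreasing (z1 z2 : {nonneg R}) : z1%:num <= z2%:num ->
  (moment p (Gz_prob mu z2) <= moment p (Gz_prob mu z1))%E.
Proof.
move=> z12; apply: moment_Gz_prob_le => x; rewrite cdfP_Gz_prob.
by apply: le_trans z12; apply: dist_Gz_le; rewrite ?cdfP_ge0 ?cdfP_le1.
Qed.

Lemma moment_Gz_prob1 : moment p (Gz_prob mu 1%:nng) = 0%E.
Proof.
rewrite moment_Gz_prob !integral0_eq ?adde0 // => r _; rewrite (max_idPl _) //.
  by rewrite subr_le0 cdfP_le1.
by rewrite subr_le0 gerBl cdfP_ge0.
Qed.

Lemma cvg_moment_Gz_prob (z_ : nat -> {nonneg R}) (z : {nonneg R}) :
  nonincreasing_seq (fun n => (z_ n)%:num) -> (z_ n)%:num @[n --> \oo] --> z%:num ->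
  moment p (Gz_prob mu (z_ n)) @[n --> \oo] --> moment p (Gz_prob mu z).
Proof.
move=> z_ni z_cvg; under eq_fun do rewrite moment_Gz_prob.
rewrite moment_Gz_prob; apply: cvgeD.
- apply: ge0_adde_def; rewrite inE;
    by apply: integral_ge0 => r _; rewrite lee_fin le_max lexx.
- by apply: cvg_integral_max0_subr => //; exact: measurable_upper_tail.
- by apply: cvg_integral_max0_subr => //; exact: measurable_lower_tail.
Qed.

Definition Gz_levels (b : \bar R) : set R :=
  [set z%:num | z in [set z : {nonneg R} | (moment p (Gz_prob mu z) <= b)%E]].

Lemma Gz_levels_inf b : Gz_levels b !=set0 -> Gz_levels b (inf (Gz_levels b)).
Proof.
set S := Gz_levels b => S0.
have inf_ge0 : 0 <= inf S by apply: lb_le_inf S0 _ => _ [z _ <-].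
pose z0 := NngNum inf_ge0; exists z0 => //=.
have z_ge0 n : 0 <= inf S + n.+1%:R^-1 by rewrite addr_ge0.
pose z_ n := NngNum (z_ge0 n).
have z_ni : nonincreasing_seq (fun n => (z_ n)%:num).
  by move=> m n mn; rewrite lerD2l lef_pV2 ?posrE // ler_nat ltnS.
have z_cvg : (z_ n)%:num @[n --> \oo] --> z0%:num.
  rewrite -[X in _ --> X]addr0; apply: cvgD; first exact: cvg_cst.
  by rewrite gtr0_cvgV0 ?cvg_shiftS; [exact: cvgr_idn | near=> n].
have mom_cvg := cvg_moment_Gz_prob z_ni z_cvg.
rewrite -(cvg_lim _ mom_cvg) //; apply: lime_le; first exact: cvgP mom_cvg.
apply: nearW => n; have : inf S < (z_ n)%:num by rewrite ltrDl.
move=> /(inf_lt S0)[_ [w wb <-] w_lt]; apply: le_trans wb.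
exact/moment_Gz_prob_nonincreasing/ltW.
Unshelve. all: by end_near. Qed.

Lemma inf_Gz_levels_le_kdist b (eta : probability R R) : (moment p eta <= b)%E ->
  ((inf (Gz_levels b))%:E <= kdist (cdfP mu) (cdfP eta))%E.
Proof.
move=> eta_b; have kfin := kdist_cdfP_fin mu eta.
have k_ge0 : 0 <= fine (kdist (cdfP mu) (cdfP eta)).
  by rewrite fine_ge0 // (le_trans _ (kdist_ub _ _ 0)).
rewrite -(fineK kfin) lee_fin; apply: ge_inf; first by exists 0 => _ [z _ <-].
exists (NngNum k_ge0) => //=; apply: le_trans eta_b; apply: moment_Gz_prob_le => x.
by rewrite -lee_fin fineK // kdist_ub.
Qed.

End Gz_moment.

Theorem lemma25 (R : realType) (eps B : R) (heps : 0 < eps) (hB : 0 < B)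
  (mu : probability R R) :
  exists z : R, 0 <= z /\
    exists eta : probability R R,
      inL eps B eta /\
      (forall x : R, cdfP eta x = Gz (cdfP mu) z x) /\
      (forall eta' : probability R R, inL eps B eta' ->
         (kdist (cdfP mu) (cdfP eta) <= kdist (cdfP mu) (cdfP eta'))%E).
Proof.
pose p := 1 + eps; have p_gt0 : 0 < p by rewrite addr_gt0.
pose S := Gz_levels p mu B%:E.
have S1 : S 1 by exists 1%:nng => //; rewrite /= moment_Gz_prob1 // lee_fin ltW.
have [z Bz infSE] := Gz_levels_inf p_gt0 (ex_intro _ _ S1).
exists z%:num; split => //; exists (Gz_prob mu z); split => //.
split => [x | eta' Leta']; first exact: cdfP_Gz_prob.
apply: le_trans (kdist_Gz_prob_le mu z) _; rewrite infSE.
exact: inf_Gz_levels_le_kdist.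
Qed.
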